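(* Let $\sigma\colon\mathbb{H}^3\to\mathbb{H}^3$ be the cyclic shift $\sigma(a,b,c)=(b,c,a)$, and let $m\ge1$. Suppose $x_1,\dots,x_{3m}\in\mathbb{H}^3$ and $w_1,\dots,w_{3m}\in\mathbb{R}$ satisfy: (1) $x_{m+i}=\sigma(x_i)$ for $i=1,\dots,2m$; (2) $w_{m+i}=w_i$ for $i=1,\dots,2m$; (3) $|x_i|^2=1$ for $i=1,\dots,m$; (4) the squared inner products $|\langle x_i,x_j\rangle|^2$, taken over all $i\in\{1,\dots,m\}$ together with all $j$ in any of the following ranges, are all equal: (i) $j=i+m$; (ii) $i<j\le m$; (iii) $i+m<j\le 2m$; (iv) $i+2m<j\le 3m$; (5) the matrix $\sum_{i=1}^{3m}w_ix_ix_i^\dagger$ has $(1,1)$ entry equal to $1$ and $(1,2)$ entry equal to $0$. Then $w_1=\cdots=w_{3m}=1/m$ and $\{x_1,\dots,x_{3m}\}$ is a tight simplex in $\mathbb{H}\mathbb{P}^2$.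
   Context: $\mathbb{H}$ denotes the quaternions; $\dagger$ is conjugate transpose and $\langle x,y\rangle=x^\dagger y$ on $\mathbb{H}^3$. $\mathbb{H}\mathbb{P}^{2}$ is the space of quaternionic lines in $\mathbb{H}^3$ (scalars acting on the right), points represented by unit vectors. A tight simplex of $N$ points in $\mathbb{H}\mathbb{P}^{2}$ is a set of $N$ distinct points $x_1,\dots,x_N$ with $|\langle x_i,x_j\rangle|^2=\frac{N-3}{3(N-1)}$ for all $i\ne j$. *)

From HB Require Import structures.
From mathcomp Require Import all_boot all_order all_algebra.
Set Implicit Arguments. Unset Strict Implicit. Unset Printing Implicit Defensive.
Import Order.TTheory GRing.Theory Num.Theory.
Local Open Scope ring_scope.

Section Quat.
Variable R : realFieldType.

Record quat := Quat { qre : R; qi : R; qj : R; qk : R }.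

Definition qzero : quat := Quat 0 0 0 0.
Definition qadd (p q : quat) : quat :=
  Quat (qre p + qre q) (qi p + qi q) (qj p + qj q) (qk p + qk q).
Definition qmul (p q : quat) : quat :=
  Quat (qre p * qre q - qi p * qi q - qj p * qj q - qk p * qk q)
       (qre p * qi q + qi p * qre q + qj p * qk q - qk p * qj q)
       (qre p * qj q - qi p * qk q + qj p * qre q + qk p * qi q)
       (qre p * qk q + qi p * qj q - qj p * qi q + qk p * qre q).
Definition qconj (q : quat) : quat := Quat (qre q) (- qi q) (- qj q) (- qk q).
Definition qscale (a : R) (q : quat) : quat :=
  Quat (a * qre q) (a * qi q) (a * qj q) (a * qk q).
Definition qreal (a : R) : quat := Quat a 0 0 0.
Definition qnorm2 (q : quat) : R :=
  qre q ^+ 2 + qi q ^+ 2 + qj q ^+ 2 + qk q ^+ 2.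
Definition qsum (lo hi : nat) (F : nat -> quat) : quat :=
  Quat (\sum_(lo <= i < hi) qre (F i)) (\sum_(lo <= i < hi) qi (F i))
       (\sum_(lo <= i < hi) qj (F i)) (\sum_(lo <= i < hi) qk (F i)).

Definition hvec := 'I_3 -> quat.

Definition hinner (x y : hvec) : quat :=
  qadd (qmul (qconj (x 0%R)) (y 0%R))
       (qadd (qmul (qconj (x 1%R)) (y 1%R)) (qmul (qconj (x 2%R)) (y 2%R))).
Definition hshift (x : hvec) : hvec := fun k => x (k + 1)%R.

(* (a,b) entry of the matrix x x^dagger : x_a * conj(x_b) *)
Definition outer_entry (x : hvec) (a b : 'I_3) : quat := qmul (x a) (qconj (x b)).

(* x and y span the same quaternionic line (right scalars): y = x * lambda
   for some nonzero lambda *)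
Definition same_hline (x y : hvec) : Prop :=
  exists lam : quat, lam <> qzero /\ forall k, y k = qmul (x k) lam.

(* tight simplex of N points in HP^2, points represented by the unit
   vectors x_1..x_N (indices 1..N) *)
Definition tight_simplex (N : nat) (x : nat -> hvec) : Prop :=
  (forall i, (1 <= i <= N)%N -> \sum_(k < 3) qnorm2 (x i k) = 1) /\
  (forall i j, (1 <= i <= N)%N -> (1 <= j <= N)%N -> i <> j ->
     ~ same_hline (x i) (x j)) /\
  (forall i j, (1 <= i <= N)%N -> (1 <= j <= N)%N -> i <> j ->
     qnorm2 (hinner (x i) (x j)) = (N%:R - 3) / (3 * (N%:R - 1))).

End Quat.

(* The shift orbit of x contributes [hnorm2 x * hnorm2 y + 2 <T x, T y>] to
   the sum of the squared inner products with y, where T x collects the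
   off-diagonal entries of the orbit's outer products.  Hypothesis (5) makes
   the weighted sums of the T x_i vanish and the weights sum to one over a set
   of orbit representatives, so sum_i w_i |<x_i, y>|^2 = |y|^2 for every y.
   Taking y = x_j, all cross terms equal c, which gives
   3 c + w_j (1 - c) = 1 for every j.  Hence the weights are all equal to
   1/m, c takes the tight-simplex value, and c <> 1 separates the lines. *)

From HB Require Import structures.
From mathcomp Require Import all_boot all_order all_algebra.
From mathcomp Require Import reals.
From mathcomp Require Import ring lra zify.
Import Order.TTheory GRing.Theory Num.Theory.
Set Implicit Arguments. Unset Strict Implicit.
Local Open Scope ring_scope.

Section QuaternionIdentities.
Variable R : realFieldType.
Implicit Types (x y : hvec R) (p q : quat R).

Lemma hshift0 x : hshift x 0 = x 1.
Proof. by congr (x _); apply/val_inj. Qed.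

Lemma hshift1 x : hshift x 1 = x 2.
Proof. by congr (x _); apply/val_inj. Qed.

Lemma hshift2 x : hshift x 2 = x 0.
Proof. by congr (x _); apply/val_inj. Qed.

Definition hshiftE := (hshift0, hshift1, hshift2).

Definition hnorm2 x : R := qnorm2 (x 0) + qnorm2 (x 1) + qnorm2 (x 2).

Definition hinner2 x y : R := qnorm2 (hinner x y).

Definition qdot p q : R :=
  qre p * qre q + qi p * qi q + qj p * qj q + qk p * qk q.

(* The sum of the (1,2) entries of the outer products of x, hshift x and
   hshift (hshift x). *)
Definition cyc_outer x : quat R :=
  qadd (outer_entry x 0 1) (qadd (outer_entry x 1 2) (outer_entry x 2 0)).

Ltac quat_expand x y :=
  move: (x 0) (x 1) (x 2) (y 0) (y 1) (y 2)
    => [a0 a1 a2 a3] [b0 b1 b2 b3] [c0 c1 c2 c3]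
       [d0 d1 d2 d3] [e0 e1 e2 e3] [f0 f1 f2 f3];
  rewrite /qnorm2 /qadd /qmul /qconj /=.

Lemma hnorm2E x : \sum_(k < 3) qnorm2 (x k) = hnorm2 x.
Proof.
rewrite /hnorm2 !big_ord_recl big_ord0 addr0 addrA.
by congr (qnorm2 (x _) + qnorm2 (x _) + qnorm2 (x _)); apply/val_inj.
Qed.

Lemma hnorm2_shift x : hnorm2 (hshift x) = hnorm2 x.
Proof. rewrite /hnorm2 !hshiftE; quat_expand x x; ring. Qed.

Lemma hinner2C x y : hinner2 x y = hinner2 y x.
Proof. rewrite /hinner2 /hinner; quat_expand x y; ring. Qed.

Lemma hinner2_shift x y : hinner2 (hshift x) (hshift y) = hinner2 x y.
Proof.
rewrite /hinner2 /hinner !hshiftE; quat_expand x y; ring.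
Qed.

Lemma hinner2_shiftl x y : hinner2 (hshift x) y = hinner2 x (hshift (hshift y)).
Proof.
rewrite /hinner2 /hinner !hshiftE; quat_expand x y; ring.
Qed.

Lemma hinner2_iter_shift n x y :
  hinner2 (iter n (@hshift R) x) (iter n (@hshift R) y) = hinner2 x y.
Proof. by elim: n => //= n IHn; rewrite hinner2_shift. Qed.

Lemma hinner2_self x : hinner2 x x = hnorm2 x ^+ 2.
Proof. rewrite /hinner2 /hnorm2 /hinner; quat_expand x x; ring. Qed.

(* Summed over its shift orbit, x acts on y like the scalar [hnorm2 x], up to
   a term linear in [cyc_outer x]; weighted sums of that term vanish by the
   hypothesis on the (1,2) entry of the frame operator. *)
Lemma hinner2_orbit x y :
  hinner2 x y + hinner2 (hshift x) y + hinner2 (hshift (hshift x)) y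
  = hnorm2 x * hnorm2 y + 2 * qdot (cyc_outer x) (cyc_outer y).
Proof.
rewrite /hinner2 /hnorm2 /cyc_outer /qdot /hinner /outer_entry.
rewrite !hshiftE; quat_expand x y; ring.
Qed.

Lemma qre_outer00_orbit x :
  qre (outer_entry x 0 0) + qre (outer_entry (hshift x) 0 0)
  + qre (outer_entry (hshift (hshift x)) 0 0) = hnorm2 x.
Proof. rewrite /hnorm2 /outer_entry !hshiftE; quat_expand x x; ring. Qed.

Lemma hnorm2_iter_shift n x : hnorm2 (iter n (@hshift R) x) = hnorm2 x.
Proof. by elim: n => //= n IHn; rewrite hnorm2_shift. Qed.

Lemma hinner2_same_hline x y : same_hline x y -> hinner2 x y = hnorm2 x * hnorm2 y.
Proof.
move=> [lam [_ ylam]].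
rewrite /hinner2 /hnorm2 /hinner !ylam; case: lam {ylam} => l0 l1 l2 l3.
quat_expand x x; ring.
Qed.

Lemma qdot_qsuml lo hi (F : nat -> quat R) q :
  qdot (qsum lo hi F) q = \sum_(lo <= i < hi) qdot (F i) q.
Proof. by rewrite /qdot /= !mulr_suml -!big_split. Qed.

Lemma qdot_qscalel a p q : qdot (qscale a p) q = a * qdot p q.
Proof. rewrite /qdot /=; ring. Qed.

End QuaternionIdentities.

Lemma big_nat_D1 (V : nmodType) lo hi j (F : nat -> V) : (lo <= j < hi)%N ->
  \sum_(lo <= i < hi) F i = F j + \sum_(lo <= i < hi | i != j) F i.
Proof. by move=> hj; rewrite (bigD1_seq j) ?mem_index_iota ?iota_uniq. Qed.

Lemma big_nat_shiftn (V : nmodType) a n k (F : nat -> V) :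
  \sum_(a + k <= i < n + k) F i = \sum_(a <= i < n) F (i + k)%N.
Proof. by rewrite big_addn addnK. Qed.

Lemma big_nat_blocks3 (V : nmodType) m (F : nat -> V) :
  \sum_(1 <= i < (3 * m).+1) F i
  = \sum_(1 <= i < m.+1) (F i + F (i + m)%N + F (i + 2 * m)%N).
Proof.
rewrite !big_split /= -!big_nat_shiftn !add1n !addSn addnn -mul2n -mulSn.
by rewrite -addrA -!big_cat_nat //; lia.
Qed.

Lemma index_block m i : (1 <= i <= 3 * m)%N ->
  exists2 i0, (1 <= i0 <= m)%N & exists2 a, (a < 3)%N & i = (i0 + a * m)%N.
Proof.
move=> hi; case: (leqP i m) => h1.
  by exists i; [lia | exists 0%N => //; lia].
case: (leqP i (2 * m)) => h2.
  by exists (i - m)%N; [lia | exists 1%N => //; lia].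
by exists (i - 2 * m)%N; [lia | exists 2%N => //; lia].
Qed.

Section ShiftOrbits.
Variables (R : realFieldType) (m : nat) (x : nat -> hvec R) (w : nat -> R).
Hypothesis x_shift : forall i, (1 <= i <= 2 * m)%N -> x (m + i)%N = hshift (x i).
Hypothesis w_shift : forall i, (1 <= i <= 2 * m)%N -> w (m + i)%N = w i.

Lemma x_shift1 i : (1 <= i <= m)%N -> hshift (x i) = x (i + m)%N.
Proof. by move=> hi; rewrite addnC x_shift //; lia. Qed.

Lemma x_shift2 i : (1 <= i <= m)%N -> hshift (hshift (x i)) = x (i + 2 * m)%N.
Proof.
move=> hi; rewrite x_shift1 // -x_shift; last lia.
by congr (x _); lia.
Qed.

Lemma w_shift1 i : (1 <= i <= m)%N -> w (i + m)%N = w i.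
Proof. by move=> hi; rewrite addnC w_shift //; lia. Qed.

Lemma w_shift2 i : (1 <= i <= m)%N -> w (i + 2 * m)%N = w i.
Proof.
move=> hi; have -> : (i + 2 * m = m + (i + m))%N by lia.
by rewrite w_shift ?w_shift1 //; lia.
Qed.

Lemma x_block i a : (1 <= i <= m)%N -> (a < 3)%N ->
  x (i + a * m)%N = iter a (@hshift R) (x i).
Proof.
move=> hi; case: a => [|[|[|]]] // _ /=.
- by rewrite addn0.
- by rewrite x_shift1 // mul1n.
- by rewrite x_shift2.
Qed.

Lemma orbit_sum (h : hvec R -> R) :
  \sum_(1 <= i < (3 * m).+1) w i * h (x i) =
  \sum_(1 <= i < m.+1) w i * (h (x i) + h (hshift (x i)) + h (hshift (hshift (x i)))).
Proof.
rewrite big_nat_blocks3; apply: eq_big_nat => i hi.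
by rewrite x_shift2 // x_shift1 // w_shift1 // w_shift2 // !mulrDr.
Qed.

Lemma qre_qsum_outer00 :
  qre (qsum 1 (3 * m).+1 (fun i => qscale (w i) (outer_entry (x i) 0 0)))
  = \sum_(1 <= i < m.+1) w i * hnorm2 (x i).
Proof.
rewrite /qsum /= (orbit_sum (fun u => qre (outer_entry u 0 0))).
by apply: eq_big_nat => i _; rewrite qre_outer00_orbit.
Qed.

Lemma qsum_outer01 :
  qsum 1 (3 * m).+1 (fun i => qscale (w i) (outer_entry (x i) 0 1))
  = qsum 1 m.+1 (fun i => qscale (w i) (cyc_outer (x i))).
Proof.
have orbit01 (pi : quat R -> R) : (forall p q, pi (qadd p q) = pi p + pi q) ->
    \sum_(1 <= i < (3 * m).+1) w i * pi (outer_entry (x i) 0 1)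
    = \sum_(1 <= i < m.+1) w i * pi (cyc_outer (x i)).
  move=> pi_add; rewrite (orbit_sum (fun u => pi (outer_entry u 0 1))).
  apply: eq_big_nat => i _; rewrite /cyc_outer !pi_add /outer_entry !hshiftE.
  by rewrite addrA.
by rewrite /qsum; congr Quat; [exact: (orbit01 (@qre R)) | exact: (orbit01 (@qi R))
  | exact: (orbit01 (@qj R)) | exact: (orbit01 (@qk R))].
Qed.

Lemma weighted_hinner2 y :
  \sum_(1 <= i < (3 * m).+1) w i * hinner2 (x i) y
  = hnorm2 y * \sum_(1 <= i < m.+1) w i * hnorm2 (x i)
    + 2 * qdot (qsum 1 m.+1 (fun i => qscale (w i) (cyc_outer (x i)))) (cyc_outer y).
Proof.
rewrite (orbit_sum (fun u => hinner2 u y)) qdot_qsuml !mulr_sumr -big_split /=.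
by apply: eq_big_nat => i _; rewrite hinner2_orbit qdot_qscalel; ring.
Qed.

Variable c : R.
Hypothesis hinner2_given : forall i j, (1 <= i <= m)%N ->
  [\/ j = (i + m)%N, (i < j <= m)%N, (i + m < j <= 2 * m)%N
     | (i + 2 * m < j <= 3 * m)%N] ->
  hinner2 (x i) (x j) = c.

(* Symmetry and [hinner2_shiftl] move the shift onto the larger index, which
   then lies in one of the four ranges of [hinner2_given]. *)
Lemma hinner2_base_shift i j d : (1 <= i <= m)%N -> (1 <= j <= m)%N -> (d < 3)%N ->
  (i != j) || (d != 0%N) -> hinner2 (x i) (iter d (@hshift R) (x j)) = c.
Proof.
move=> hi hj; case: d => [|[|[|]]] // _ /= hij; case: (ltngtP i j) => lt_ij.
- by apply: hinner2_given => //; apply: Or42; lia.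
- by rewrite hinner2C; apply: hinner2_given => //; apply: Or42; lia.
- by move: hij; rewrite lt_ij eqxx.
- by rewrite x_shift1 //; apply: hinner2_given => //; apply: Or43; lia.
- rewrite hinner2C hinner2_shiftl x_shift2 //.
  by apply: hinner2_given => //; apply: Or44; lia.
- by rewrite lt_ij x_shift1 //; apply: hinner2_given => //; apply: Or41.
- by rewrite x_shift2 //; apply: hinner2_given => //; apply: Or44; lia.
- rewrite -hinner2_shiftl hinner2C x_shift1 //.
  by apply: hinner2_given => //; apply: Or43; lia.
- rewrite lt_ij -hinner2_shiftl hinner2C x_shift1 //.
  by apply: hinner2_given => //; apply: Or41.
Qed.

Lemma hinner2_pairs i j : (1 <= i <= 3 * m)%N -> (1 <= j <= 3 * m)%N -> i <> j ->
  hinner2 (x i) (x j) = c.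
Proof.
move=> /index_block [i0 hi0 [a ha ->]] /index_block [j0 hj0 [b hb ->]].
wlog le_ab : i0 j0 a b hi0 hj0 ha hb / (a <= b)%N => [H hij|].
  have [le_ab|lt_ba] := leqP a b; first exact: H.
  by rewrite hinner2C; apply: H => //; [exact: ltnW | move/esym/hij].
move=> hij; rewrite !x_block // -(subnKC le_ab) iterD hinner2_iter_shift.
apply: hinner2_base_shift => //; first lia.
case: eqP => [e|] //=; apply/eqP => e'; apply: hij.
by rewrite e; have -> : b = a by lia.
Qed.

Hypothesis hnorm2_base : forall i, (1 <= i <= m)%N -> hnorm2 (x i) = 1.
Hypothesis outer00 :
  qsum 1 (3 * m).+1 (fun i => qscale (w i) (outer_entry (x i) 0 0)) = qreal 1.
Hypothesis outer01 :
  qsum 1 (3 * m).+1 (fun i => qscale (w i) (outer_entry (x i) 0 1)) = qzero R.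

Lemma hnorm2_all i : (1 <= i <= 3 * m)%N -> hnorm2 (x i) = 1.
Proof.
by case/index_block => i0 hi0 [a ha ->]; rewrite x_block // hnorm2_iter_shift hnorm2_base.
Qed.

Lemma sum_weighted_hnorm2 : \sum_(1 <= i < m.+1) w i * hnorm2 (x i) = 1.
Proof. by rewrite -qre_qsum_outer00 outer00. Qed.

Lemma sum_weights_base : \sum_(1 <= i < m.+1) w i = 1.
Proof.
rewrite -sum_weighted_hnorm2; apply: eq_big_nat => i hi.
by rewrite hnorm2_base ?mulr1.
Qed.

Lemma sum_weights : \sum_(1 <= i < (3 * m).+1) w i = 3.
Proof.
have := orbit_sum (fun=> 1).
rewrite (eq_bigr _ (fun i _ => mulr1 (w i))) -mulr_suml sum_weights_base => ->.
lra.
Qed.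

Lemma sum_weighted_hinner2 y : hnorm2 y = 1 ->
  \sum_(1 <= i < (3 * m).+1) w i * hinner2 (x i) y = 1.
Proof.
move=> hy; rewrite weighted_hinner2 -qsum_outer01 outer01 hy mul1r.
by rewrite sum_weighted_hnorm2 /qdot /= !mul0r !addr0 mulr0 addr0.
Qed.

Lemma weight_equation j : (1 <= j <= 3 * m)%N -> 3 * c + w j * (1 - c) = 1.
Proof.
move=> hj; have nj := hnorm2_all hj.
have hj' : (1 <= j < (3 * m).+1)%N by rewrite ltnS.
have := sum_weighted_hinner2 nj.
rewrite (big_nat_D1 _ hj') hinner2_self nj expr1n mulr1.
have -> : \sum_(1 <= i < (3 * m).+1 | i != j) w i * hinner2 (x i) (x j)
    = (\sum_(1 <= i < (3 * m).+1 | i != j) w i) * c.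
  rewrite mulr_suml big_seq_cond [RHS]big_seq_cond; apply: eq_bigr => i /andP [hi ne].
  by rewrite mem_index_iota in hi; rewrite hinner2_pairs //; apply/eqP.
have := sum_weights; rewrite (big_nat_D1 _ hj') => sw.
have -> : \sum_(1 <= i < (3 * m).+1 | i != j) w i = 3 - w j by lra.
by move=> e; rewrite -[RHS]e; ring.
Qed.

End ShiftOrbits.

Lemma tight_simplex_parameters (R : realFieldType) (m : nat) (c v : R) : (1 <= m)%N ->
  3 * c + v * (1 - c) = 1 -> v *+ m = 1 ->
  v = m%:R^-1 /\ c = ((3 * m)%:R - 3) / (3 * ((3 * m)%:R - 1)).
Proof.
move=> m1 hc hv; rewrite -mulr_natr in hv.
have m0 : m%:R != 0 :> R by rewrite pnatr_eq0 -lt0n.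
split; first by rewrite -[v](mulfK m0) hv mul1r.
have cm : c * (3 * m%:R - 1) = m%:R - 1.
  have : m%:R * (3 * c + v * (1 - c)) = m%:R by rewrite hc mulr1.
  by rewrite mulrDr !mulrA (mulrC _ v) hv mul1r; lra.
have d0 : 3 * (3 * m%:R - 1) != 0 :> R.
  have : 1 <= m%:R :> R by rewrite ler1n.
  by move=> M1; apply/eqP; lra.
by rewrite natrM; apply: (canRL (mulfK d0)); rewrite mulrCA cm; ring.
Qed.

Theorem proposition4p6 (R : realType) (m : nat) (x : nat -> hvec R)
  (w : nat -> R) :
  (1 <= m)%N ->
  (forall i, (1 <= i <= 2 * m)%N -> x (m + i)%N = hshift (x i)) ->
  (forall i, (1 <= i <= 2 * m)%N -> w (m + i)%N = w i) ->
  (forall i, (1 <= i <= m)%N -> \sum_(k < 3) qnorm2 (x i k) = 1) ->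
  (exists c : R, forall i j, (1 <= i <= m)%N ->
     [\/ j = (i + m)%N, (i < j <= m)%N, (i + m < j <= 2 * m)%N
       | (i + 2 * m < j <= 3 * m)%N] ->
     qnorm2 (hinner (x i) (x j)) = c) ->
  qsum 1 (3 * m).+1 (fun i => qscale (w i) (outer_entry (x i) 0 0)) = qreal 1 ->
  qsum 1 (3 * m).+1 (fun i => qscale (w i) (outer_entry (x i) 0 1)) = qzero R ->
  (forall i, (1 <= i <= 3 * m)%N -> w i = (m%:R)^-1) /\
  tight_simplex (3 * m) x.
Proof.
move=> m1 x_shift w_shift hnorm [c hc] outer00 outer01.
have hnorm_base i : (1 <= i <= m)%N -> hnorm2 (x i) = 1.
  by move=> hi; rewrite -hnorm2E hnorm.
have hnorm_all := hnorm2_all x_shift hnorm_base.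
have pairs := hinner2_pairs x_shift hc.
have weq := weight_equation x_shift w_shift hc hnorm_base outer00 outer01.
have h1 : (1 <= 1 <= 3 * m)%N by lia.
have c1 : 1 - c != 0 by apply/eqP => c_eq; have := weq 1%N h1; rewrite c_eq; lra.
have wconst i : (1 <= i <= 3 * m)%N -> w i = w 1%N.
  by move=> hi; apply: (mulIf c1); have := weq i hi; have := weq 1%N h1; lra.
have wsum : w 1%N *+ m = 1.
  have := sumr_const_nat m.+1 1 (w 1%N); rewrite subn1 /= => <-.
  rewrite -(sum_weights_base x_shift w_shift hnorm_base outer00).
  by apply: eq_big_nat => i hi; rewrite (wconst i) //; lia.
have [w_val c_val] := tight_simplex_parameters m1 (weq 1%N h1) wsum.
split; first by move=> i hi; rewrite wconst.
split; [|split].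
- by move=> i hi; rewrite hnorm2E hnorm_all.
- move=> i j hi hj hij hline; move: c1.
  by rewrite -(pairs i j hi hj hij) hinner2_same_hline // !hnorm_all // mulr1 subrr eqxx.
- by move=> i j hi hj hij; rewrite -c_val; exact: pairs.
Qed.
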